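(* Let $W$ be a complex reflection group acting on $V$ and let $g\in W$ satisfy $\ell_R(g)=\operatorname{codim}(V^g)$. Then: (1) every reflection $t$ with $t\le_{\mathcal R} g$ belongs to the parabolic closure $W_g$ of $g$; (2) for every parabolic subgroup $W_X\le W$ containing $g$, we have $\mathrm{Red}_W(g)=\mathrm{Red}_{W_X}(g)$.
   Context: $V$ is a finite-dimensional complex vector space with a Hermitian inner product; a (unitary) reflection is a unitary map whose fixed space is a hyperplane; a complex reflection group is a finite subgroup $W\le\mathrm{GL}(V)$ generated by reflections, with set of reflections $\mathcal R$. For $w\in W$, $V^w$ is its fixed space. The reflection length $\ell_R(g)$ is the minimal $k$ such that $g=t_1\cdots t_k$ with $t_i\in\mathcal R$; such a factorization of length $\ell_R(g)$ is reduced, and $\mathrm{Red}_W(g)$ denotes the set of tuples $(t_1,\dots,t_{\ell_R(g)})\in\mathcal R^{\ell_R(g)}$ with product $g$ (for a subgroup $W_X$, $\mathrm{Red}_{W_X}(g)$ uses reflections of $W_X$ and the reflection length in $W_X$). The absolute order is defined by $u\le_{\mathcal R}v$ iff $\ell_R(u)+\ell_R(u^{-1}v)=\ell_R(v)$. A parabolic subgroup is the pointwise stabilizer of a subset of $V$; the pointwise stabilizer of a flat (intersection of reflection hyperplanes) $X$ is denoted $W_X$. The parabolic closure $W_g$ of $g$ is the intersection of all parabolic subgroups containing $g$; it equals $W_{V^g}$. *)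

From HB Require Import structures.
From mathcomp Require Import all_boot all_order all_algebra.
Set Implicit Arguments. Unset Strict Implicit. Unset Printing Implicit Defensive.
Import Order.TTheory GRing.Theory Num.Theory.
Local Open Scope ring_scope.

(* V = C^n (row vectors 'rV[C]_n) with the standard Hermitian product
   <u, v> = u *m (conj v)^T; linear maps act on the right: v |-> v *m g. *)

Section RefGroups.
Variables (C : numClosedFieldType) (n : nat).
Notation M := 'M[C]_n.

Definition adjmx (g : M) : M := (map_mx Num.conj g)^T.

Definition unitary_mx (g : M) : Prop := g *m adjmx g = 1%:M.

Definition fixspace (g : M) : M := kermx (g - 1%:M).

Definition codim_fix (g : M) : nat := (n - \rank (fixspace g))%N.

Definition is_reflection (t : M) : Prop :=
  unitary_mx t /\ (\rank (fixspace t)).+1 = n.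

Definition mprod (s : seq M) : M := foldr (fun a b => a *m b) 1%:M s.

(* complex reflection group: a finite subgroup of GL(V) (given by the finite
   list W of its elements) generated by its (unitary) reflections *)
Definition complex_reflection_group (W : seq M) : Prop :=
  [/\ 1%:M \in W,
      (forall u v, u \in W -> v \in W -> u *m v \in W),
      (forall u, u \in W -> u \in unitmx /\ invmx u \in W) &
      (forall w, w \in W -> exists s : seq M,
          (forall t, t \in s -> t \in W /\ is_reflection t) /\ mprod s = w)].

(* subgroups are handled as predicates *)
Definition memW (W : seq M) : M -> Prop := fun w => w \in W.

Definition factorable (G : M -> Prop) (k : nat) (g : M) : Prop :=
  exists s : seq M, size s = k /\
    (forall t, t \in s -> G t /\ is_reflection t) /\ mprod s = g.

Definition reflen (G : M -> Prop) (g : M) (k : nat) : Prop :=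
  factorable G k g /\ forall j, factorable G j g -> (k <= j)%N.

Definition Red (G : M -> Prop) (g : M) (s : seq M) : Prop :=
  exists k, reflen G g k /\ size s = k /\
    (forall t, t \in s -> G t /\ is_reflection t) /\ mprod s = g.

Definition abs_le (G : M -> Prop) (u v : M) : Prop :=
  exists a b c, reflen G u a /\ reflen G (invmx u *m v) b /\
    reflen G v c /\ (a + b)%N = c.

(* pointwise stabilizer in W of a subset A of V (a parabolic subgroup) *)
Definition pstab (W : seq M) (A : 'rV[C]_n -> Prop) : M -> Prop :=
  fun w => w \in W /\ forall v, A v -> v *m w = v.

Definition parabolic_closure (W : seq M) (g : M) : M -> Prop :=
  fun w => forall A : 'rV[C]_n -> Prop, pstab W A g -> pstab W A w.

End RefGroups.

From HB Require Import structures.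
From mathcomp Require Import all_boot all_order all_algebra.
From mathcomp Require Import zify.
Set Implicit Arguments. Unset Strict Implicit. Unset Printing Implicit Defensive.
Import Order.TTheory GRing.Theory Num.Theory.
Local Open Scope ring_scope.

(* If g = t_1 ... t_k is a product of reflections, then V^g contains the
   intersection of the hyperplanes V^{t_i}, which has codimension at most k.
   When k = codim V^g the two spaces therefore coincide, so every factor t_i
   fixes V^g pointwise and lies in every parabolic subgroup containing g.
   A reflection below g in the absolute order is the first factor of such a
   factorization, and a reduced factorization of g in W is already one in
   any parabolic W_X containing g, where g has the same reflection length. *)

Section FixedSpaces.
Variables (C : numClosedFieldType) (n : nat).
Notation M := 'M[C]_n.

Lemma sub_fixspaceP m (B : 'M[C]_(m, n)) (g : M) :
  (B <= fixspace g)%MS <-> B *m g = B.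
Proof.
rewrite /fixspace; split.
  by move/sub_kermxP; rewrite mulmxBr mulmx1 => /eqP; rewrite subr_eq0 => /eqP.
by move=> BgB; apply/sub_kermxP; rewrite mulmxBr mulmx1 BgB subrr.
Qed.

Definition common_fixspace (s : seq M) : M :=
  foldr (fun t F => fixspace t :&: F)%MS 1%:M s.

Lemma common_fixspace_sub_mprod (s : seq M) :
  (common_fixspace s <= fixspace (mprod s))%MS.
Proof.
elim: s => [|t s IHs] /=; first by apply/sub_fixspaceP; rewrite mulmx1.
apply/sub_fixspaceP.
have /sub_fixspaceP Ft : (fixspace t :&: common_fixspace s <= fixspace t)%MS.
  exact: capmxSl.
have /sub_fixspaceP Fs :
    (fixspace t :&: common_fixspace s <= fixspace (mprod s))%MS.
  exact: submx_trans (capmxSr _ _) IHs.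
by rewrite mulmxA Ft Fs.
Qed.

Lemma common_fixspace_sub_mem (s : seq M) t :
  t \in s -> (common_fixspace s <= fixspace t)%MS.
Proof.
elim: s => [|u s IHs] //=; rewrite inE => /predU1P [-> | ts].
  exact: capmxSl.
exact: submx_trans (capmxSr _ _) (IHs ts).
Qed.

Lemma rank_common_fixspace (s : seq M) :
  (forall t, t \in s -> is_reflection t) ->
  (n - size s <= \rank (common_fixspace s))%N.
Proof.
elim: s => [|t s IHs] refl_s /=; first by rewrite mxrank1; lia.
have IHs' := IHs (fun u us => refl_s u (mem_behead (s := t :: s) us)).
have [_ rank_t] := refl_s t (mem_head _ _).
have := mxrank_sum_cap (fixspace t) (common_fixspace s).
have := rank_leq_col (fixspace t + common_fixspace s)%MS.
lia.
Qed.

Lemma fixspace_mprod_sub_common (s : seq M) :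
  (forall t, t \in s -> is_reflection t) ->
  size s = codim_fix (mprod s) ->
  (fixspace (mprod s) <= common_fixspace s)%MS.
Proof.
move=> refl_s; rewrite /codim_fix => size_s.
have [_ <-] := mxrank_leqif_sup (common_fixspace_sub_mprod s).
have := rank_common_fixspace refl_s.
have := mxrankS (common_fixspace_sub_mprod s).
have := rank_leq_col (fixspace (mprod s)).
move=> ? ? ?; apply/eqP; lia.
Qed.

Lemma fixspace_sub_reduced_factor (s : seq M) (g t : M) :
  (forall u, u \in s -> is_reflection u) ->
  mprod s = g -> size s = codim_fix g -> t \in s ->
  (fixspace g <= fixspace t)%MS.
Proof.
move=> refl_s <- size_s ts.
apply: submx_trans (fixspace_mprod_sub_common refl_s size_s) _.
exact: common_fixspace_sub_mem.
Qed.

Lemma reflection_neq1 (t : M) : is_reflection t -> t != 1%:M.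
Proof.
case=> _ rank_t; apply/eqP => t1; move: rank_t.
by rewrite t1 /fixspace subrr kermx0 mxrank1; lia.
Qed.

End FixedSpaces.

Section ReflectionLength.
Variables (C : numClosedFieldType) (n : nat).
Notation M := 'M[C]_n.
Implicit Types (G H : M -> Prop) (g t : M) (s : seq M).

Lemma reflection_unitmx t : is_reflection t -> t \in unitmx.
Proof. by case=> /mulmx1_unit []. Qed.

Lemma reflen_unique G g a b : reflen G g a -> reflen G g b -> a = b.
Proof. by move=> [fa min_a] [fb min_b]; apply/eqP; rewrite eqn_leq min_a ?min_b. Qed.

Lemma reflen_reflection G t : G t -> is_reflection t -> reflen G t 1.
Proof.
move=> Gt refl_t; split.
  exists [:: t]; split=> //; split; last by rewrite /mprod /= mulmx1.
  by move=> u; rewrite inE => /eqP ->.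
case=> // -[s [+ [_ prod_s]]]; case: s prod_s => //= t1 _.
by move: (reflection_neq1 refl_t); rewrite -t1 eqxx.
Qed.

Lemma reflen_sub G H g k : (forall t, G t -> H t) ->
  reflen H g k -> factorable G k g -> reflen G g k.
Proof.
move=> GH [_ min_k] fact_g; split=> // j [s [size_s [refl_s prod_s]]].
apply: min_k; exists s; split=> //; split=> // t /refl_s [/GH].
by split.
Qed.

Lemma RedE G g k s : reflen G g k ->
  Red G g s <->
  [/\ size s = k, forall t, t \in s -> G t /\ is_reflection t & mprod s = g].
Proof.
move=> len_g; split.
  case=> j [len_j [size_s [refl_s prod_s]]].
  by rewrite (reflen_unique len_g len_j).
by case=> size_s refl_s prod_s; exists k.
Qed.

End ReflectionLength.

Section Parabolic.
Variables (C : numClosedFieldType) (n : nat) (W : seq 'M[C]_n).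
Variable A : 'rV[C]_n -> Prop.
Notation M := 'M[C]_n.

Lemma pstab_fixspace_sub (g t : M) :
  t \in W -> (fixspace g <= fixspace t)%MS -> pstab W A g -> pstab W A t.
Proof.
move=> tW fix_sub [_ Ag]; split=> // v Av.
by apply/sub_fixspaceP; apply: submx_trans fix_sub; apply/sub_fixspaceP/Ag.
Qed.

Lemma reduced_factor_pstab (g : M) (s : seq M) :
  pstab W A g -> mprod s = g -> size s = codim_fix g ->
  (forall t, t \in s -> memW W t /\ is_reflection t) ->
  forall t, t \in s -> pstab W A t /\ is_reflection t.
Proof.
move=> Ag prod_s size_s refl_s t ts; have [tW refl_t] := refl_s t ts.
split=> //; apply: pstab_fixspace_sub tW _ Ag.
by apply: fixspace_sub_reduced_factor prod_s size_s ts => u /refl_s [].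
Qed.

Lemma reflen_pstab (g : M) :
  pstab W A g -> reflen (memW W) g (codim_fix g) ->
  reflen (pstab W A) g (codim_fix g).
Proof.
move=> Ag len_g; have [[s [size_s [refl_s prod_s]]] _] := len_g.
apply: reflen_sub len_g _; first by move=> t [].
exists s; split=> //; split=> //.
exact: reduced_factor_pstab Ag prod_s size_s refl_s.
Qed.

Lemma reflection_below_pstab (g t : M) :
  t \in W -> is_reflection t -> abs_le (memW W) t g ->
  reflen (memW W) g (codim_fix g) -> pstab W A g -> pstab W A t.
Proof.
move=> tW refl_t [a [b [c [len_t [len_tg [len_g' abc]]]]]] len_g Ag.
have a1 := reflen_unique len_t (reflen_reflection tW refl_t).
have c_codim := reflen_unique len_g' len_g.
have [[s [size_s [refl_s prod_s]]] _] := len_tg.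
have prod_ts : mprod (t :: s) = g.
  by rewrite /= prod_s mulKVmx // reflection_unitmx.
have refl_ts u : u \in t :: s -> memW W u /\ is_reflection u.
  by rewrite inE => /predU1P [-> | /refl_s].
have size_ts : size (t :: s) = codim_fix g by rewrite /= size_s -c_codim -abc a1.
by have [] := reduced_factor_pstab Ag prod_ts size_ts refl_ts (mem_head t s).
Qed.

End Parabolic.

Theorem mainTheorem3 (C : numClosedFieldType) (n : nat) (W : seq 'M[C]_n)
    (g : 'M[C]_n) :
  complex_reflection_group W -> g \in W ->
  reflen (memW W) g (codim_fix g) ->
  (forall t : 'M[C]_n, t \in W -> is_reflection t ->
      abs_le (memW W) t g -> parabolic_closure W g t) /\
  (forall A : 'rV[C]_n -> Prop, pstab W A g ->
      forall s : seq 'M[C]_n, Red (memW W) g s <-> Red (pstab W A) g s).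
Proof.
(* No group axiom of W is needed. *)
move=> _ _ len_g; split.
  by move=> t tW refl_t le_tg A; apply: reflection_below_pstab.
move=> A Ag s; rewrite (RedE _ len_g) (RedE _ (reflen_pstab Ag len_g)).
split=> -[size_s refl_s prod_s]; split=> //.
  exact: reduced_factor_pstab Ag prod_s size_s refl_s.
by move=> t /refl_s [[]].
Qed.
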